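(* Let $A,B,C$ be compact convex sets in the plane with no common point, and let $A'\subset A$, $B'\subset B$, $C'\subset C$ be compact convex sets that are pairwise intersecting. Then $o(A'B'C')=o(ABC)$.
   Context: For three pairwise intersecting compact convex sets $X,Y,Z$ in the plane: $o(XYZ)=0$ if $X\cap Y\cap Z\neq\emptyset$; otherwise $o(XYZ)=o(xyz)$ for any $x\in Y\cap Z$, $y\in X\cap Z$, $z\in X\cap Y$, where for points $o(xyz)=+1$ for a counterclockwise and $-1$ for a clockwise triangle (this is known to be independent of the choice of $x,y,z$). *)

From mathcomp Require Import all_boot all_order all_algebra.
From mathcomp Require Import all_classical all_reals all_analysis.
Set Implicit Arguments. Unset Strict Implicit. Unset Printing Implicit Defensive.
Import Order.TTheory GRing.Theory Num.Theory numFieldNormedType.Exports.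
Local Open Scope classical_set_scope.
Local Open Scope ring_scope.

Section Defs.
Variable R : realType.
Definition point := (R * R)%type.

Definition det3 (x y z : point) : R :=
  (y.1 - x.1) * (z.2 - x.2) - (y.2 - x.2) * (z.1 - x.1).

(* o(xyz): +1 counterclockwise, -1 clockwise (0 if degenerate) *)
Definition orient_pts (x y z : point) : R := Num.sg (det3 x y z).

(* o(XYZ) for pairwise intersecting sets: 0 if common point, otherwise
   o(xyz) for (chosen) x in Y∩Z, y in X∩Z, z in X∩Y. *)
Definition orient_sets (X Y Z : set point) : R :=
  if `[< exists p, X p /\ Y p /\ Z p >] then 0
  else orient_pts (xget (0, 0) (Y `&` Z)) (xget (0, 0) (X `&` Z))
                  (xget (0, 0) (X `&` Y)).
End Defs.

From mathcomp Require Import all_boot all_order all_algebra.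
From mathcomp Require Import all_classical all_reals all_analysis.
From mathcomp Require Import ring lra.
Set Implicit Arguments. Unset Strict Implicit. Unset Printing Implicit Defensive.
Import Order.TTheory GRing.Theory Num.Theory numFieldNormedType.Exports.
Local Open Scope classical_set_scope.
Local Open Scope ring_scope.

(* If A, B, C are convex with no common point, then points x in B∩C,
   y in A∩C and z in A∩B are never collinear: of three collinear points one
   lies between the other two, and convexity would put it in all three sets.
   Moving x inside the convex set B∩C changes det3 x y z affinely along a
   segment, so its sign cannot flip without a zero; hence, one point at a
   time, o(xyz) does not depend on the choice of x, y, z.  Points chosen for
   A', B', C' are admissible choices for A, B, C, so the orientations agree. *)

Section RealLine.
Variable R : realFieldType.

Lemma between_conv (u v m : R) : (u <= m <= v) || (v <= m <= u) ->
  exists2 t, 0 <= t <= 1 & m = t * u + (1 - t) * v.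
Proof.
wlog uv : u v / u <= v => [hw|].
  have [/hw//|vu] := leP u v; rewrite orbC => /(hw v u (ltW vu)) [t t01 ->].
  by exists (1 - t); [lra | ring].
move=> /orP[/andP[um mv]|/andP[vm mu]]; last first.
  by exists 0; [lra | have -> : m = v by lra]; ring.
have [uv_eq|uneqv] := eqVneq u v.
  by exists 0; [lra | have -> : m = v by lra]; ring.
have vu0 : 0 < v - u by rewrite subr_gt0 lt_neqAle uneqv.
exists ((v - m) / (v - u)).
  by rewrite divr_ge0 ?ler_pdivrMr ?subr_ge0 // mul1r; lra.
by field; rewrite gt_eqF.
Qed.

Lemma median_between (a b c : R) : exists2 t, 0 <= t <= 1 &
  [\/ a = t * b + (1 - t) * c, b = t * a + (1 - t) * c | c = t * a + (1 - t) * b].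
Proof.
have [/between_conv[t t01 e]|na] := boolP ((b <= a <= c) || (c <= a <= b)).
  by exists t => //; apply: Or31.
have [/between_conv[t t01 e]|nb] := boolP ((a <= b <= c) || (c <= b <= a)).
  by exists t => //; apply: Or32.
have /between_conv[t t01 e] : (a <= c <= b) || (b <= c <= a).
  by move: na nb; case: (lerP a b); case: (lerP b c); case: (lerP a c) => //=; lra.
by exists t => //; apply: Or33.
Qed.

Lemma sgr_eq_of_convex_neq0 (a b : R) :
  (forall t, 0 <= t <= 1 -> t * a + (1 - t) * b != 0) -> Num.sg a = Num.sg b.
Proof.
move=> nz.
have a0 : a != 0 by have := nz 1; rewrite lexx ler01 subrr mul1r mul0r addr0; apply.
have b0 : b != 0 by have := nz 0; rewrite lexx ler01 subr0 mul1r mul0r add0r; apply.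
have [/between_conv[t t01 e]|nab] := boolP ((a <= 0 <= b) || (b <= 0 <= a)).
  by have := nz t t01; rewrite -e eqxx.
move: nab a0 b0.
have [a_lt0|a_gt0|->] := ltgtP a 0; have [b_lt0|b_gt0|->] := ltgtP b 0;
  rewrite ?eqxx //; first [by rewrite !ltr0_sg | by rewrite !gtr0_sg | lra].
Qed.
End RealLine.

Section ConvexCombination.
Variables (R : realFieldType) (V : lmodType R).

Lemma convex_set_comb (A : set V) (x y : V) (t : R) : convex_set A ->
  0 <= t <= 1 -> A x -> A y -> A (t *: x + (1 - t) *: y).
Proof.
move=> cA /andP[t0 t1] Ax Ay.
by have := cA x y (Itv01 t0 t1); rewrite !inE; apply.
Qed.

Lemma line_comb (x d : V) (a b t : R) :
  t *: (x + a *: d) + (1 - t) *: (x + b *: d) = x + (t * a + (1 - t) * b) *: d.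
Proof. by rewrite !scalerDr !scalerA addrACA -scalerDl subrKC scale1r scalerDl. Qed.

Lemma collinear_between (x d : V) (a b c : R) : exists2 t, 0 <= t <= 1 &
  [\/ x + a *: d = t *: (x + b *: d) + (1 - t) *: (x + c *: d),
      x + b *: d = t *: (x + a *: d) + (1 - t) *: (x + c *: d) |
      x + c *: d = t *: (x + a *: d) + (1 - t) *: (x + b *: d)].
Proof.
have [t t01 abc] := median_between a b c.
by exists t => //; rewrite !line_comb; case: abc => ->; constructor.
Qed.
End ConvexCombination.

Section Plane.
Variable R : realType.
Implicit Types (x y z : (R * R)%type) (P Q : set (R * R)%type).

Let scaleRE (t a : R) : t *: a = t * a. Proof. by []. Qed.

Lemma det3_rot x y z : det3 x y z = det3 y z x.
Proof. by rewrite /det3; ring. Qed.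

Lemma det3_combl x x' y z (t : R) :
  det3 (t *: x + (1 - t) *: x') y z = t * det3 x y z + (1 - t) * det3 x' y z.
Proof. by rewrite /det3 /= !scaleRE; ring. Qed.

Lemma det3_eq0_line x y z : det3 x y z = 0 -> x != y ->
  exists l : R, z = x + l *: (y - x).
Proof.
case: x y z => [x1 x2] [y1 y2] [z1 z2] d0 xy.
set s := (y1 - x1) ^+ 2 + (y2 - x2) ^+ 2.
set T := (y1 - x1) * (z1 - x1) + (y2 - x2) * (z2 - x2).
have s0 : s != 0.
  apply: contraNneq xy => /eqP; rewrite paddr_eq0 ?sqr_ge0 // !sqrf_eq0 !subr_eq0.
  by case/andP => /eqP <- /eqP <-.
(* [T / s] is the coordinate of the orthogonal projection of [z - x] on [y - x]. *)
have proj1 : s * (z1 - x1) = T * (y1 - x1).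
  apply/eqP; rewrite -subr_eq0; apply/eqP.
  transitivity (- (y2 - x2) * det3 (x1, x2) (y1, y2) (z1, z2)).
    by rewrite /det3 /s /T /=; ring.
  by rewrite d0 mulr0.
have proj2 : s * (z2 - x2) = T * (y2 - x2).
  apply/eqP; rewrite -subr_eq0; apply/eqP.
  transitivity ((y1 - x1) * det3 (x1, x2) (y1, y2) (z1, z2)).
    by rewrite /det3 /s /T /=; ring.
  by rewrite d0 mulr0.
exists (T / s); apply: injective_projections; rewrite /= scaleRE mulrAC.
- by rewrite -proj1 mulrAC divff // mul1r subrKC.
- by rewrite -proj2 mulrAC divff // mul1r subrKC.
Qed.

Lemma det3_eq0_between x y z : det3 x y z = 0 -> exists2 t : R, 0 <= t <= 1 &
  [\/ x = t *: y + (1 - t) *: z, y = t *: x + (1 - t) *: z | z = t *: x + (1 - t) *: y].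
Proof.
move=> d0; have [<-|xy] := eqVneq x y.
  by exists 1; [rewrite lexx ler01 | apply: Or32; rewrite subrr scale0r addr0 scale1r].
have [l ->] := det3_eq0_line d0 xy.
by have := collinear_between x (y - x) 0 1 l; rewrite scale0r addr0 scale1r subrKC.
Qed.

Lemma sgr_det3_eq P Q x x' y z : convex_set P -> convex_set Q ->
  (forall w, P w -> Q w -> det3 w y z != 0) ->
  P x -> Q x -> P x' -> Q x' -> Num.sg (det3 x y z) = Num.sg (det3 x' y z).
Proof.
move=> cP cQ nz Px Qx Px' Qx'; apply: sgr_eq_of_convex_neq0 => t t01.
by rewrite -det3_combl; apply: nz; apply: convex_set_comb.
Qed.

Section NoCommonPoint.
Variables A B C : set (R * R)%type.
Hypotheses (cA : convex_set A) (cB : convex_set B) (cC : convex_set C).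
Hypothesis noABC : ~ exists p, A p /\ B p /\ C p.

Lemma det3_neq0 x y z : B x -> C x -> A y -> C y -> A z -> B z -> det3 x y z != 0.
Proof.
move=> Bx Cx Ay Cy Az Bz; apply/eqP => /det3_eq0_between[t t01 between].
apply: noABC; case: between => [ex|ey|ez].
- by exists x; do !split => //; rewrite ex; apply: convex_set_comb.
- by exists y; do !split => //; rewrite ey; apply: convex_set_comb.
- by exists z; do !split => //; rewrite ez; apply: convex_set_comb.
Qed.

Lemma sgr_det3_indep x y z x' y' z' :
  B x -> C x -> A y -> C y -> A z -> B z ->
  B x' -> C x' -> A y' -> C y' -> A z' -> B z' ->
  Num.sg (det3 x y z) = Num.sg (det3 x' y' z').
Proof.
move=> Bx Cx Ay Cy Az Bz Bx' Cx' Ay' Cy' Az' Bz'.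
rewrite (sgr_det3_eq cB cC _ Bx Cx Bx' Cx'); last by move=> w Bw Cw; apply: det3_neq0.
rewrite det3_rot (sgr_det3_eq cA cC _ Ay Cy Ay' Cy'); last first.
  by move=> w Aw Cw; rewrite -det3_rot; apply: det3_neq0.
rewrite det3_rot (sgr_det3_eq cA cB _ Az Bz Az' Bz'); last first.
  by move=> w Aw Bw; rewrite -2!det3_rot; apply: det3_neq0.
by rewrite det3_rot.
Qed.

Lemma orient_setsE x y z : B x -> C x -> A y -> C y -> A z -> B z ->
  orient_sets A B C = orient_pts x y z.
Proof.
move=> Bx Cx Ay Cy Az Bz; rewrite /orient_sets asboolF //.
have [Bx' Cx'] := xgetI (0, 0) (conj Bx Cx : (B `&` C) x).
have [Ay' Cy'] := xgetI (0, 0) (conj Ay Cy : (A `&` C) y).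
have [Az' Bz'] := xgetI (0, 0) (conj Az Bz : (A `&` B) z).
exact: sgr_det3_indep.
Qed.
End NoCommonPoint.
End Plane.

Theorem corollary1 (R : realType) (A B C A' B' C' : set (R * R)%type) :
  compact A -> compact B -> compact C ->
  convex_set A -> convex_set B -> convex_set C ->
  ~ (exists p, A p /\ B p /\ C p) ->
  compact A' -> compact B' -> compact C' ->
  convex_set A' -> convex_set B' -> convex_set C' ->
  A' `<=` A -> B' `<=` B -> C' `<=` C ->
  A' `&` B' !=set0 -> A' `&` C' !=set0 -> B' `&` C' !=set0 ->
  orient_sets A' B' C' = orient_sets A B C.
Proof.
move=> _ _ _ cA cB cC noABC _ _ _ cA' cB' cC' sA sB sC.
move=> [z [Az Bz]] [y [Ay Cy]] [x [Bx Cx]].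
have noABC' : ~ exists p, A' p /\ B' p /\ C' p.
  by move=> [p [/sA Ap [/sB Bp /sC Cp]]]; apply: noABC; exists p.
rewrite (orient_setsE cA' cB' cC' noABC' Bx Cx Ay Cy Az Bz).
by rewrite (orient_setsE cA cB cC noABC (sB _ Bx) (sC _ Cx)
  (sA _ Ay) (sC _ Cy) (sA _ Az) (sB _ Bz)).
Qed.
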